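(* Let $G$ be a 2-connected graph. Then for every positive integer $k$ there is a protocol solving the multiparty equality problem on $G$ with $k$-bit inputs in the local broadcast model, in which only the vertices of a fixed minimum total vertex cover of $G$ send messages, and whose total cost is at most $\left(\tfrac{k}{2}+o(k)\right)\mathsf{tvc}(G)$, where $o(k)$ is taken as $k\to\infty$ with $G$ fixed. In particular $\mathrm{opt}(G)\le \tfrac12\,\mathsf{tvc}(G)$.
   Context: Multiparty equality in the local broadcast model: $G$ is a connected graph and $k$ a positive integer; every vertex $v$ receives an input $\lambda(v)\in\{0,1\}^k$. Vertices communicate (possibly over several rounds) by broadcasting messages; a message broadcast by a vertex is received by all of its neighbours, and its number of bits is counted once. Protocols are deterministic and static: which vertices send messages, and the lengths of the messages, depend only on $G$ and $k$, while the contents of messages may depend on the inputs (and on previously received messages). At the end, every vertex accepts or rejects. The protocol solves the problem if, whenever all inputs are equal, every vertex accepts, and whenever two inputs differ, at least one vertex rejects. The total cost of a protocol is the sum over all vertices of the number of bits they broadcast. $\mathrm{opt}(G,k)$ is the minimum total cost of a protocol solving the problem, and $\mathrm{opt}(G)=\lim_{k\to\infty}\mathrm{opt}(G,k)/k$ (this limit exists). A total vertex cover of $G$ is a set $S\subseteq V(G)$ that is a vertex cover (every edge has an endpoint in $S$) and a total dominating set (every vertex of $G$, including those in $S$, has a neighbour in $S$); $\mathsf{tvc}(G)$ is the minimum size of a total vertex cover. *)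

From HB Require Import structures.
From mathcomp Require Import all_boot all_order all_algebra.
Set Implicit Arguments. Unset Strict Implicit. Unset Printing Implicit Defensive.
Import Order.TTheory GRing.Theory Num.Theory.

Definition simple_graph (V : finType) (e : rel V) : Prop :=
  symmetric e /\ irreflexive e.

Definition graph_connected (V : finType) (e : rel V) : Prop :=
  forall u v : V, connect e u v.

Definition del_vertex (V : finType) (e : rel V) (x : V) : rel V :=
  [rel a b | [&& e a b, a != x & b != x]].

Definition two_connected (V : finType) (e : rel V) : Prop :=
  [/\ 2 < #|V|, graph_connected e &
      forall x u v : V, u != x -> v != x -> connect (del_vertex e x) u v].

Definition is_vertex_cover (V : finType) (e : rel V) (S : {set V}) : Prop :=
  forall u v, e u v -> (u \in S) || (v \in S).

Definition is_total_dominating (V : finType) (e : rel V) (S : {set V}) : Prop :=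
  forall v, exists2 u, u \in S & e v u.

Definition is_tvc (V : finType) (e : rel V) (S : {set V}) : Prop :=
  is_vertex_cover e S /\ is_total_dominating e S.

(* S is a minimum total vertex cover; then tvc(G) = #|S|. *)
Definition min_tvc (V : finType) (e : rel V) (S : {set V}) : Prop :=
  is_tvc e S /\ forall S' : {set V}, is_tvc e S' -> #|S| <= #|S'|.

(* A (deterministic, static) protocol for k-bit inputs on vertex set V:
   - [rounds] rounds, numbered 0 .. rounds-1;
   - [len t v] : number of bits broadcast by v in round t (depends only on
     the protocol, i.e. on G and k, not on the inputs);
   - [msg t v x h] : the content broadcast by v in round t, given its input x
     and its view h (h s u = message received from u in round s);
   - [decide v x h] : acceptance bit of v at the end.
   Views are functions nat -> V -> bitseq; the execution below masks them so
   that v only sees messages of neighbours from earlier rounds. *)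
Record protocol (V : finType) (k : nat) := Protocol {
  rounds : nat;
  len : nat -> V -> nat;
  msg : nat -> V -> k.-tuple bool -> (nat -> V -> seq bool) -> seq bool;
  decide : V -> k.-tuple bool -> (nat -> V -> seq bool) -> bool
}.

Definition fix_len (n : nat) (s : seq bool) : seq bool :=
  take n s ++ nseq (n - size s) false.

Section Exec.
Variables (V : finType) (e : rel V) (k : nat) (P : protocol V k)
          (lam : V -> k.-tuple bool).

Definition view (v : V) (tr : nat -> V -> seq bool) : nat -> V -> seq bool :=
  fun s u => if e v u then tr s u else [::].

Fixpoint run (t : nat) : nat -> V -> seq bool :=
  match t with
  | 0 => fun _ _ => [::]
  | t'.+1 => fun s u =>
      if s < t' then run t' s u
      else if s == t' then
        fix_len (len P t' u) (msg P t' u (lam u) (view u (run t')))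
      else [::]
  end.

Definition accepts (v : V) : bool :=
  decide P v (lam v) (view v (run (rounds P))).

End Exec.

Definition solves (V : finType) (e : rel V) (k : nat) (P : protocol V k) : Prop :=
  forall lam : V -> k.-tuple bool,
    ((forall u v, lam u = lam v) -> forall v, accepts e P lam v) /\
    ((exists u v, lam u <> lam v) -> exists v, ~~ accepts e P lam v).

Definition cost (V : finType) (k : nat) (P : protocol V k) : nat :=
  \sum_(t < rounds P) \sum_(v : V) len P t v.

Definition senders_in (V : finType) (k : nat) (P : protocol V k) (S : {set V}) : Prop :=
  forall t v, t < rounds P -> v \notin S -> len P t v = 0.

(* Only the vertices of the total vertex cover S speak, each once. The k input bits are
   cut into 2n+1 chunks of j bits, with n ~ sqrt k and 2nj ~ k, read as offsets X_i, a
   check value Y and slopes A_i; a vertex u of S whose st-number is c broadcasts the n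
   values X_i + c A_i and Y + c |A|^2, about k/2 bits, and each neighbour accepts iff its
   own input yields the same values at colour c.
   Suppose everybody accepts and let A_s be the slopes of s. For each vertex p consider
   the potential of its codeword at its own colour: a quantity computed from the message
   alone, which along a fixed codeword is affine in the colour with slope |A_p - A_s|^2.
   Every edge has an endpoint in S, so its two codewords share their message at the colour
   of that endpoint; hence the potential does not decrease along an edge going up in the
   st-numbering, and as it vanishes at s and at t it vanishes everywhere. A neighbour in S
   of p provides a second root of the affine function of p, so A_p = A_s, and then equal
   messages force equal codewords; connectivity makes all inputs equal. The st-numbering
   exists because the graph is 2-connected: it is grown ear by ear from the edge st. *)

From Stdlib Require Import PeanoNat.
From mathcomp Require Import all_boot all_order all_algebra zify ring lra.
Set Implicit Arguments. Unset Strict Implicit. Unset Printing Implicit Defensive.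
Import Order.TTheory GRing.Theory Num.Theory.

Definition bits (w v : nat) : bitseq := mkseq (Nat.testbit v) w.

Lemma size_bits w v : size (bits w v) = w.
Proof. exact: size_mkseq. Qed.

Lemma testbit_ge v w m : v < 2 ^ w -> w <= m -> Nat.testbit v m = false.
Proof.
move=> v_lt w_le; apply/Nat.testbit_false; rewrite Nat.div_small //.
have : 2 ^ w <= 2 ^ m by rewrite leq_exp2l.
have pow2E i : 2 ^ i = Nat.pow 2 i by elim: i => // i IH; rewrite expnS IH.
by move: v_lt; rewrite !pow2E; lia.
Qed.

Lemma bits_inj w v v' : v < 2 ^ w -> v' < 2 ^ w -> bits w v = bits w v' -> v = v'.
Proof.
move=> v_lt v'_lt bitsE; apply/Nat.bits_inj_iff => m.
have [m_lt | w_le] := ltnP m w.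
  by have := congr1 (nth false ^~ m) bitsE; rewrite !nth_mkseq.
by rewrite (testbit_ge v_lt w_le) (testbit_ge v'_lt w_le).
Qed.

Lemma flatten_bits_inj (T : eqType) w (f g : T -> nat) (r : seq T) :
  flatten [seq bits w (f i) | i <- r] = flatten [seq bits w (g i) | i <- r] ->
  {in r, forall i, bits w (f i) = bits w (g i)}.
Proof.
elim: r => [|i r IH] //= /eqP; rewrite eqseq_cat ?size_bits // => /andP[/eqP fgi /eqP fgr].
by move=> x; rewrite inE => /predU1P[-> // | /(IH fgr)].
Qed.

Section Paths.
Variable T : eqType.
Implicit Types (r : rel T) (P : pred T).

Lemma path_first_hit r P x p : path r x p -> ~~ P x -> P (last x p) ->
  exists q y rest, [/\ p = q ++ y :: rest, P y, all (predC P) (x :: q)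
                     & path r x (rcons q y)].
Proof.
elim: p x => [|y p IH] x /=; first by move=> _ /negbTE->.
case/andP=> rxy y_p Px_n Plast; case Py: (P y).
  by exists [::], y, p; split; rewrite //= ?Px_n ?rxy.
have [q [z [rest [-> Pz q_n qz]]]] := IH y y_p (negbT Py) Plast.
by exists (y :: q), z, rest; split; rewrite //= ?Px_n ?rxy.
Qed.

Lemma path_rcons_neighbours r a I b x : path r a (rcons I b) -> x \in I ->
  (exists2 y, y \in a :: I & r y x) /\ (exists2 y, y \in rcons I b & r x y).
Proof.
move=> rI xI; move: rI; case/splitPr: xI => I1 I2.
 rewrite rcons_cat rcons_cons cat_path /= => /and3P[_ r_last r_next].
split; first by exists (last a I1); rewrite // -cat_cons mem_cat mem_last.
by case: I2 r_next => [|y I2] /= /andP[rxy _];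
  [exists b | exists y]; rewrite // mem_cat !inE eqxx !orbT.
Qed.

Definition before (L : seq T) : rel T := fun x y => index x L < index y L.

Lemma before_trans L : transitive (before L).
Proof. by move=> y x z; apply: ltn_trans. Qed.

Lemma sorted_before L : uniq L -> sorted (before L) L.
Proof.
case: L => // x0 L' uL; set L := x0 :: L'.
change (sorted (relpre (index^~ L) ltn) L); rewrite -sorted_map.
suff -> : map (index^~ L) L = iota 0 (size L) by exact: iota_ltn_sorted.
rewrite -[X in map _ X](mkseq_nth x0) /mkseq -map_comp -[RHS]map_id.
by apply/eq_in_map => i; rewrite mem_iota add0n => i_lt; exact: index_uniq.
Qed.

Lemma before_subseq L L' : subseq L L' -> uniq L' ->
  {in L &, forall x y, before L x y -> before L' x y}.
Proof.
move=> sLL' uL'; apply: sorted_ltn_index; first exact: before_trans.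
exact: (subseq_sorted (@before_trans L') sLL' (sorted_before uL')).
Qed.

Lemma path_rcons_rev r a I b : symmetric r ->
  path r a (rcons I b) -> path r b (rcons (rev I) a).
Proof.
move=> rsym aIb; have := rev_path r a (rcons I b).
rewrite last_rcons belast_rcons rev_cons => ->.
by rewrite (@eq_path _ _ r) // => x y; rewrite /= rsym.
Qed.

End Paths.

(** * st-numberings of 2-connected graphs *)

Section StOrder.
Variables (V : finType) (e : rel V).
Hypothesis e_sym : symmetric e.

Definition st_order (L : seq V) (s t : V) : Prop :=
  [/\ uniq L, s \in L, t \in L,
      {in L, forall x, x != s -> exists2 y, y \in L & e x y && before L y x}
    & {in L, forall x, x != t -> exists2 y, y \in L & e x y && before L x y}].

Lemma st_order_edge s t : e s t -> s != t -> st_order [:: s; t] s t.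
Proof.
move=> est st; have beforest : before [:: s; t] s t by rewrite /before /= eqxx (negbTE st).
split; rewrite /= ?inE ?eqxx ?orbT ?st //.
  move=> x; rewrite !inE => /predU1P[-> | /eqP->]; rewrite ?eqxx // => _.
  by exists s; rewrite ?inE ?eqxx // e_sym est.
move=> x; rewrite !inE => /predU1P[-> | /eqP->]; rewrite ?eqxx // => _.
by exists t; rewrite ?inE ?eqxx ?orbT // est.
Qed.

Lemma st_order_insert P Q I a b s t : st_order (P ++ Q) s t ->
  a \in P -> b \in Q -> uniq I -> {in I, forall x, x \notin P ++ Q} ->
  path e a (rcons I b) -> st_order (P ++ I ++ Q) s t.
Proof.
move=> [uL sL tL lo hi] aP bQ uI freshI aIb; set L' := P ++ I ++ Q.
have uL' : uniq L' by rewrite uniq_catCA cat_uniq uI uL has_sym andbT; apply/hasPn.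
have subL : subseq (P ++ Q) L' := cat_subseq (subseq_refl P) (suffix_subseq I Q).
have subI : subseq (a :: rcons I b) L'.
  by rewrite -cats1 -cat1s cat_subseq ?sub1seq // cat_subseq ?sub1seq.
have memI y : y \in a :: I -> y \in L'.
  by rewrite inE => /predU1P[-> | yI]; apply: (mem_subseq subI);
    rewrite ?mem_head // inE mem_rcons inE yI !orbT.
have memIb y : y \in rcons I b -> y \in L'.
  by move=> yI; apply: (mem_subseq subI); rewrite inE yI orbT.
have ear : path [rel x y | e x y && before L' x y] a (rcons I b).
  rewrite path_relI aIb.
  exact: (subseq_sorted (@before_trans _ L') subI (sorted_before uL')).
have memL' x : (x \in L') = (x \in P ++ Q) || (x \in I).
  by rewrite !mem_cat orbCA orbC.
have beforeL' := before_subseq subL uL'.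
split; rewrite ?(mem_subseq subL) //.
  move=> x; rewrite memL' => /orP[xL | xI] xs.
    have [y yL /andP[exy yx]] := lo x xL xs.
    by exists y; rewrite ?(mem_subseq subL) ?exy ?beforeL'.
  have [[y yI /andP[eyx yx]] _] := path_rcons_neighbours ear xI.
  by exists y; rewrite ?memI // e_sym eyx.
move=> x; rewrite memL' => /orP[xL | xI] xt.
  have [y yL /andP[exy xy]] := hi x xL xt.
  by exists y; rewrite ?(mem_subseq subL) ?exy ?beforeL'.
have [_ [y yI exy]] := path_rcons_neighbours ear xI.
by exists y; rewrite ?memIb.
Qed.

Hypothesis connected : graph_connected e.
Hypothesis connected_del : forall x u v, u != x -> v != x -> connect (del_vertex e x) u v.

(* Leave [L] along an edge [a y], then return to [L] inside G - a, aiming at whichever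
   of s, t differs from a. *)
Lemma ear_exists (L : seq V) s t z : s \in L -> t \in L -> s != t -> z \notin L ->
  exists a b I, [/\ a \in L, b \in L & a != b] /\
    [/\ uniq I, {in I, forall x, x \notin L}, 0 < size I & path e a (rcons I b)].
Proof.
move=> sL tL st zL; have /connectP[p s_p zE] := connected s z.
have [q [y [_ [_ yL sLq s_qy]]]] : exists q y rest, [/\ p = q ++ y :: rest, y \notin L,
    all (predC [predC L]) (s :: q) & path e s (rcons q y)].
  by apply: path_first_hit s_p _ _; rewrite /= -?zE ?negbK.
set a := last s q; have aL : a \in L by have := allP sLq a (mem_last s q); rewrite /= negbK.
have eay : e a y by move: s_qy; rewrite rcons_path => /andP[].
have ya : y != a by apply: contraNneq yL => ->.
set b0 := if a == s then t else s.
have b0L : b0 \in L by rewrite /b0; case: ifP.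
have b0a : b0 != a by rewrite /b0; case: (eqVneq a s) => [-> | ?]; rewrite eq_sym.
have /connectP[p' y_p' b0E] := connected_del ya b0a.
rewrite b0E in b0L; case: (shortenP y_p') b0L => {b0E y_p'} p3 y_p3 u_p3 _ p3L.
have [q' [b [rest [p3E bL q'_fresh y_q'b]]]] := path_first_hit (P := mem L) y_p3 yL p3L.
have ba : b != a by move: y_q'b; rewrite rcons_path => /andP[_] /and3P[].
exists a, b, (y :: q'); split; split; rewrite 1?eq_sym //.
- by move: u_p3; rewrite p3E -cat_cons cat_uniq => /andP[].
- by move=> x /(allP q'_fresh).
rewrite rcons_cons /= eay; apply: sub_path y_q'b => u v /=; by case/andP.
Qed.

Lemma st_order_grow (L : seq V) s t : st_order L s t -> s != t -> (exists z, z \notin L) ->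
  exists2 L', st_order L' s t & size L < size L'.
Proof.
move=> oL st [z zL]; have [uL sL tL _ _] := oL.
have [a [b [I [[aL bL ab] [uI freshI I0 aIb]]]]] := ear_exists sL tL st zL.
wlog ab_before : a b I aL bL ab uI freshI I0 aIb / before L a b.
  move=> grow; case: (ltngtP (index a L) (index b L)) => [ab_lt | ba | abE].
  - exact: (grow a b I).
  - apply: (grow b a (rev I)); rewrite ?rev_uniq ?size_rev 1?eq_sym //.
      by move=> x; rewrite mem_rev; apply: freshI.
    exact: path_rcons_rev.
  - by move: ab; rewrite -(nth_index a aL) abE nth_index ?eqxx.
set P := take (index a L).+1 L; set Q := drop (index a L).+1 L.
have LE : L = P ++ Q by rewrite cat_take_drop.
have aP : a \in P by rewrite in_take.
have bP : b \notin P by rewrite in_take // ltnS -ltnNge.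
have bQ : b \in Q by move: bL; rewrite {1}LE mem_cat (negbTE bP).
exists (P ++ I ++ Q); first by apply: (st_order_insert (a := a) (b := b)); rewrite -?LE.
by rewrite LE !size_cat ltn_add2l -{1}[size Q]add0n ltn_add2r.
Qed.

Lemma st_order_exists s t : e s t -> s != t -> exists2 L, st_order L s t & forall x, x \in L.
Proof.
move=> est st; suff grow_all : forall m L, #|V| - size L < m -> st_order L s t ->
    exists2 L', st_order L' s t & forall x, x \in L'.
  exact: (grow_all _ _ (ltnSn _) (st_order_edge est st)).
elim=> // m IH L Lm oL; case: (pickP [predC L]) => [z zL | allL]; last first.
  by exists L => // x; apply/negbFE/allL.
have [L' oL' grows] := st_order_grow oL st (ex_intro _ z zL).
have : size L' <= #|V| by have [uL' _ _ _ _] := oL'; rewrite -(card_uniqP uL') max_card.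
by move=> L'V; apply: IH oL'; lia.
Qed.

Definition st_numbering (pi : V -> nat) (s t : V) : Prop :=
  [/\ injective pi, forall p, pi p < #|V|,
      forall p, p != s -> exists2 q, e p q & pi q < pi p
    & forall p, p != t -> exists2 q, e p q & pi p < pi q].

Lemma st_numbering_exists s t : e s t -> s != t -> exists pi, st_numbering pi s t.
Proof.
move=> est st; have [L [uL _ _ lower higher] allL] := st_order_exists est st.
exists (index^~ L); split.
- by move=> x y; apply: index_inj; rewrite ?allL.
- by move=> p; rewrite (leq_trans _ (max_card (mem L))) // (card_uniqP uL) index_mem.
- by move=> p ps; have [q _ /andP[epq qp]] := lower p (allL p) ps; exists q.
- by move=> p pt; have [q _ /andP[epq pq]] := higher p (allL p) pt; exists q.
Qed.

End StOrder.

Section StNumberingBounds.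
Variables (V : finType) (e : rel V) (pi : V -> nat) (s t : V).
Hypotheses (e_sym : symmetric e) (pi_st : st_numbering e pi s t).
Variables (d : Order.disp_t) (T : porderType d) (phi : V -> T).
Hypothesis phi_mono : forall p q, e p q -> pi p < pi q -> (phi p <= phi q)%O.

Lemma st_numbering_ge p : (phi s <= phi p)%O.
Proof.
have [_ _ lower _] := pi_st; elim: (pi p).+1 {-2}p (ltnSn (pi p)) => // m IH {}p pm.
case: (eqVneq p s) => [-> // | ps]; have [q epq qp] := lower p ps.
by rewrite (le_trans (IH q _)) ?phi_mono 1?e_sym //; lia.
Qed.

Lemma st_numbering_le p : (phi p <= phi t)%O.
Proof.
have [_ pi_lt _ higher] := pi_st.
elim: (#|V| - pi p).+1 {-2}p (ltnSn (#|V| - pi p)) => // m IH {}p pm.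
case: (eqVneq p t) => [-> // | pt]; have [q epq pq] := higher p pt.
rewrite (le_trans _ (IH q _)) ?phi_mono //; have := pi_lt q; lia.
Qed.

End StNumberingBounds.

(** * Codewords and their potential *)

Section Codeword.
Variable n : nat.

(* At colour [c] a codeword shows the points [X_i + c A_i] of n lines together with the
   check value [Y + c |A|^2]: n + 1 numbers for 2n + 1 chunks of input. *)
Record codeword := Codeword {
  cw_offset : {ffun 'I_n -> nat};
  cw_check : nat;
  cw_slope : {ffun 'I_n -> nat} }.

Definition message := ({ffun 'I_n -> nat} * nat)%type.

Definition msg (c : nat) (w : codeword) : message :=
  ([ffun i => cw_offset w i + c * cw_slope w i],
   cw_check w + c * \sum_i cw_slope w i ^ 2).

Lemma msg_inj_slope c w w' :
  cw_slope w = cw_slope w' -> msg c w = msg c w' -> w = w'.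
Proof.
case: w w' => X Y A [X' Y' A'] /= <- [XE /addIn YE].
congr Codeword => //; apply/ffunP => i.
by move/ffunP/(_ i): XE; rewrite !ffunE => /addIn.
Qed.

Section Potential.
Variable w0 : codeword.
Local Open Scope ring_scope.

(* Computable from the message alone; [potential_msg] shows that along a fixed codeword
   it is affine in the colour, with slope [defect w] >= 0. *)
Definition potential (c : nat) (m : message) : int :=
  m.2%:R - (msg c w0).2%:R
  - 2 * \sum_i (cw_slope w0 i)%:R * ((m.1 i)%:R - ((msg c w0).1 i)%:R).

Definition defect (w : codeword) : int :=
  \sum_i ((cw_slope w i)%:R - (cw_slope w0 i)%:R) ^+ 2.

Lemma potential_msg c w :
  potential c (msg c w) = potential 0 (msg 0 w) + c%:R * defect w.
Proof.
pose A i : int := (cw_slope w i)%:R; pose A0 i : int := (cw_slope w0 i)%:R.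
have sqE v : (\sum_i cw_slope v i ^ 2)%:R = \sum_i (cw_slope v i)%:R ^+ 2 :> int.
  by rewrite natr_sum; apply: eq_bigr => i _; rewrite natrX.
have crossE (d : nat) : \sum_i A0 i * (((msg d w).1 i)%:R - ((msg d w0).1 i)%:R)
    = \sum_i A0 i * ((cw_offset w i)%:R - (cw_offset w0 i)%:R)
      + d%:R * (\sum_i A0 i * A i - \sum_i A0 i ^+ 2).
  rewrite -sumrB mulr_sumr -big_split; apply: eq_bigr => i _.
  rewrite /= !ffunE !natrD !natrM /A /A0; ring.
have defectE : \sum_i (A i - A0 i) ^+ 2
    = \sum_i A i ^+ 2 - 2 * \sum_i A0 i * A i + \sum_i A0 i ^+ 2.
  by rewrite mulr_sumr -sumrB -big_split; apply: eq_bigr => i _ /=; ring.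
rewrite /potential /defect -/A -/A0 !crossE /= !natrD !natrM !sqE defectE.
ring.
Qed.

Lemma potential_root c : potential c (msg c w0) = 0.
Proof. by rewrite /potential big1 ?mulr0 ?subrr // => i _; rewrite subrr mulr0. Qed.

Lemma defect_ge0 w : 0 <= defect w.
Proof. by apply: sumr_ge0 => i _; apply: sqr_ge0. Qed.

Lemma potential_mono c c' w : (c <= c')%N ->
  potential c (msg c w) <= potential c' (msg c' w).
Proof.
move=> le_cc'; rewrite (potential_msg c) (potential_msg c') lerD2l.
by rewrite ler_wpM2r ?defect_ge0 ?ler_nat.
Qed.

Lemma defect_eq0 w : defect w = 0 -> cw_slope w = cw_slope w0.
Proof.
move/eqP; rewrite psumr_eq0 => [/allP A_eq | i _]; last exact: sqr_ge0.
apply/ffunP => i; have /= := A_eq i (mem_index_enum i).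
by rewrite sqrf_eq0 subr_eq0 eqr_nat => /eqP.
Qed.

Lemma potential_two_roots c c' w : c != c' ->
  potential c (msg c w) = 0 -> potential c' (msg c' w) = 0 ->
  cw_slope w = cw_slope w0.
Proof.
move=> cc' root_c root_c'; apply: defect_eq0.
have := potential_msg c w; have := potential_msg c' w; rewrite root_c root_c' => E' E.
have : (c%:R - c'%:R) * defect w = 0.
  rewrite mulrBl; apply/eqP; rewrite subr_eq0.
  by rewrite -(inj_eq (addrI (potential 0 (msg 0 w)))) -E -E'.
by move/eqP; rewrite mulf_eq0 subr_eq0 eqr_nat (negbTE cc') => /eqP.
Qed.

End Potential.
End Codeword.

Section Agreement.
Variables (V : finType) (e : rel V) (S : {set V}) (pi : V -> nat) (s t : V).
Hypotheses (e_sym : symmetric e) (e_irr : irreflexive e).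
Hypotheses (connected : graph_connected e) (S_tvc : is_tvc e S).
Hypotheses (pi_st : st_numbering e pi s t) (est : e s t) (tS : t \in S).
Variables (n : nat) (cw : V -> codeword n).
Hypothesis accepted : forall v u, e v u -> u \in S -> msg (pi u) (cw v) = msg (pi u) (cw u).

Lemma edge_msg p q : e p q ->
  exists2 c, (c == pi p) || (c == pi q) & msg c (cw p) = msg c (cw q).
Proof.
have [cover _] := S_tvc; move=> epq; case/orP: (cover p q epq) => [pS | qS].
  by exists (pi p); rewrite ?eqxx // (accepted _ pS) // e_sym.
by exists (pi q); rewrite ?eqxx ?orbT // accepted.
Qed.

Local Notation phi p := (potential (cw s) (pi p) (msg (pi p) (cw p))).

Lemma potential_edge_mono p q : e p q -> pi p < pi q -> (phi p <= phi q)%R.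
Proof.
move=> epq /ltnW pq; have [c /orP[] /eqP-> msgE] := edge_msg epq.
  by rewrite msgE potential_mono.
by rewrite -msgE potential_mono.
Qed.

Lemma potential_eq0 p : phi p = 0%R.
Proof.
have phi_t : phi t = 0%R by rewrite -(accepted est tS) potential_root.
apply/eqP; rewrite eq_le -{1}phi_t -(potential_root (cw s) (pi s)).
by rewrite (st_numbering_le pi_st potential_edge_mono)
           (st_numbering_ge e_sym pi_st potential_edge_mono).
Qed.

Lemma slope_agree p : cw_slope (cw p) = cw_slope (cw s).
Proof.
have [pi_inj _ _ _] := pi_st; have [_ total] := S_tvc; have [u uS epu] := total p.
apply: (@potential_two_roots _ _ (pi p) (pi u)); rewrite ?potential_eq0 //.
  by apply: contraTneq epu => /pi_inj->; rewrite e_irr.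
by rewrite (accepted epu uS) potential_eq0.
Qed.

Lemma codeword_edge p q : e p q -> cw p = cw q.
Proof.
by move=> /edge_msg[c _]; apply: msg_inj_slope; rewrite !slope_agree.
Qed.

Lemma codeword_agree v : cw v = cw s.
Proof.
have /connectP[p s_p ->] := connected s v; elim: p s s_p => //= y p IH x /andP[exy /IH->].
by rewrite (codeword_edge exy).
Qed.

End Agreement.

(** * Encoding inputs and messages *)

Section Chunks.
Variables (k n j : nat).

Definition chunk (x : k.-tuple bool) (i : nat) : nat :=
  enum_rank [tuple nth false x (i * j + p) | p < j].

Lemma chunk_lt x i : chunk x i < 2 ^ j.
Proof. by rewrite (leq_trans (ltn_ord _)) // card_tuple card_bool. Qed.

Lemma chunk_inj x y i p : chunk x i = chunk y i -> p < j ->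
  nth false x (i * j + p) = nth false y (i * j + p).
Proof.
move=> /val_inj/enum_rank_inj xy p_lt.
by have := congr1 (fun u => tnth u (Ordinal p_lt)) xy; rewrite !tnth_mktuple.
Qed.

Definition codeword_of (x : k.-tuple bool) : codeword n :=
  Codeword [ffun i : 'I_n => chunk x i] (chunk x n) [ffun i : 'I_n => chunk x (n.+1 + i)].

Lemma codeword_of_inj : 0 < j -> k <= n.*2.+1 * j -> injective codeword_of.
Proof.
move=> j_gt0 k_le x y xy.
have chunkE i : i < n.*2.+1 -> chunk x i = chunk y i.
  move=> i_lt; case: (ltngtP i n) => [i_lt_n | n_lt_i | ->].
  - by have := congr1 (fun w => cw_offset w (Ordinal i_lt_n)) xy; rewrite !ffunE.
  - have i'_lt : i - n.+1 < n by lia.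
    by have := congr1 (fun w => cw_slope w (Ordinal i'_lt)) xy; rewrite !ffunE /= subnKC.
  - exact: (congr1 (@cw_check n) xy).
apply: eq_from_tnth => p; rewrite !(tnth_nth false) (divn_eq p j).
apply: chunk_inj; last exact: ltn_pmod; apply: chunkE.
by rewrite ltn_divLR // (leq_trans (ltn_ord p)).
Qed.

End Chunks.

Section MessageBits.
Variables (n j B : nat).

Definition entry_width := j + B.
Definition check_width := j.*2 + n + B.
Definition msg_len := n * entry_width + check_width.

Definition msg_bits (m : message n) : bitseq :=
  flatten [seq bits entry_width (m.1 i) | i <- enum 'I_n] ++ bits check_width m.2.

Lemma size_msg_bits m : size (msg_bits m) = msg_len.
Proof.
rewrite /msg_len size_cat size_bits size_flatten /shape -map_comp -[n in n * _]size_enum_ord.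
congr (_ + _); by elim: (enum 'I_n) => //= i r ->; rewrite size_bits.
Qed.

Definition codeword_lt (w : codeword n) : Prop :=
  [/\ forall i, cw_offset w i < 2 ^ j, cw_check w < 2 ^ j & forall i, cw_slope w i < 2 ^ j].

Lemma msg_entry_lt c w i : c < B -> codeword_lt w -> (msg c w).1 i < 2 ^ entry_width.
Proof.
move=> c_lt [X_lt _ A_lt]; rewrite ffunE expnD.
have := X_lt i; have := A_lt i; have : B < 2 ^ B := ltn_expl B (ltnSn 1).
move: (2 ^ j) (2 ^ B) => d b; nia.
Qed.

Lemma msg_check_lt c w : c < B -> codeword_lt w -> (msg c w).2 < 2 ^ check_width.
Proof.
move=> c_lt [_ Y_lt A_lt]; rewrite /= !expnD -addnn expnD.
have sum_le : \sum_i cw_slope w i ^ 2 <= n * (2 ^ j * 2 ^ j).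
  rewrite -[n in n * _]card_ord -sum_nat_const; apply: leq_sum => i _.
  by rewrite -mulnn leq_mul // ltnW.
have : B < 2 ^ B := ltn_expl B (ltnSn 1); have : n < 2 ^ n := ltn_expl n (ltnSn 1).
move: sum_le Y_lt; move: (\sum_i _) (2 ^ j) (2 ^ B) (2 ^ n) => Q d b m Q_le Y_lt m_gt b_gt.
have cQ_le : c * Q <= c * n * (d * d) by rewrite -mulnA leq_mul2l Q_le orbT.
have cn_lt : 1 + c * n <= b * m by nia.
nia.
Qed.

Lemma msg_bits_inj c w w' : c < B -> codeword_lt w -> codeword_lt w' ->
  msg_bits (msg c w) = msg_bits (msg c w') -> msg c w = msg c w'.
Proof.
move=> c_lt w_lt w'_lt /eqP; rewrite eqseq_cat; last first.
  by rewrite !size_flatten /shape -!map_comp !(eq_map (fun i => size_bits _ _)).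
case/andP=> /eqP/flatten_bits_inj entryE /eqP checkE.
congr pair; last by apply: bits_inj checkE; apply: msg_check_lt.
apply/ffunP=> i; apply: bits_inj (entryE i (mem_enum _ i)); exact: msg_entry_lt.
Qed.

End MessageBits.

(** * Choice of parameters *)

Definition blocks (k : nat) : nat := (Nat.sqrt k).+1.
Definition block_width (k : nat) : nat := (k %/ (blocks k).*2).+1.

Lemma blocks_sq k : k < blocks k * blocks k.
Proof. have := Nat.sqrt_spec k (le_0_n k); rewrite /blocks; lia. Qed.

Lemma blocks_cover k : k < (blocks k).*2 * block_width k.
Proof. by rewrite /block_width mulnC ltn_ceil // double_gt0. Qed.

Lemma block_width_le k : block_width k <= blocks k.
Proof. by rewrite /block_width ltn_divLR ?double_gt0 //; have := blocks_sq k; lia. Qed.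

Lemma msg_len_ge k B : k <= 2 * msg_len (blocks k) (block_width k) B.
Proof.
have := blocks_cover k; rewrite /msg_len /entry_width /check_width.
move: (blocks k) (block_width k) => n j; nia.
Qed.

Lemma msg_len_le k B :
  2 * msg_len (blocks k) (block_width k) B <= k + 2 * ((2 * B + 4) * blocks k).
Proof.
have := leq_trunc_div k (blocks k).*2; have := block_width_le k.
rewrite /msg_len /entry_width /check_width /block_width.
move: (blocks k) (k %/ (blocks k).*2) => n q; nia.
Qed.

Section Asymptotics.
Local Open Scope ring_scope.

Lemma blocks_small (C : nat) (eps : rat) : 0 < eps ->
  exists N, forall k, (N <= k)%N -> (C * blocks k)%:R <= eps * k%:R.
Proof.
move=> eps_gt0; pose M := (Num.Def.archi_bound ((2 * C)%:R / eps)).+1.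
have CM : (2 * C)%:R <= eps * M%:R.
  have : (2 * C)%:R / eps < M%:R.
    by rewrite (lt_le_trans (archi_boundP _)) ?ler_nat // divr_ge0 // ltW.
  by rewrite ltr_pdivrMr // mulrC => /ltW.
exists (M * M)%N => k k_ge; set m := Nat.sqrt k.
have [m_sq M_le] : (m * m <= k /\ 0 < M <= m)%N.
  by have := Nat.sqrt_spec k (le_0_n k); rewrite /m; nia.
apply: (@le_trans _ _ ((2 * C)%:R * m%:R)); first by rewrite -natrM ler_nat /blocks -/m; nia.
apply: (le_trans (ler_wpM2r (ler0n _ m) CM)).
by rewrite -mulrA -natrM ler_pM2l // ler_nat; nia.
Qed.

Lemma msg_len_half (B : nat) (eps : rat) : 0 < eps ->
  exists N, forall k, (N <= k)%N ->
    `|(msg_len (blocks k) (block_width k) B)%:R - k%:R / 2| <= eps * k%:R.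
Proof.
move=> /(blocks_small (2 * B + 4))[N small]; exists N => k /small.
have := msg_len_ge k B; have := msg_len_le k B.
move: (msg_len _ _ _) ((2 * B + 4) * blocks k)%N => l d.
rewrite -!(@ler_nat rat) => hi lo small_d.
by rewrite ger0_norm; lra.
Qed.

End Asymptotics.

Lemma codeword_of_lt k n j (x : k.-tuple bool) : codeword_lt j (codeword_of n j x).
Proof. by split=> [i | | i]; rewrite ?ffunE chunk_lt. Qed.

Lemma fix_len_size m s : size s = m -> fix_len m s = s.
Proof. by move=> <-; rewrite /fix_len take_size subnn cats0. Qed.

Section Protocol.
Variables (V : finType) (e : rel V) (S : {set V}) (pi : V -> nat) (k : nat).
Local Notation n := (blocks k).
Local Notation j := (block_width k).

Definition sender_bits (v : V) (x : k.-tuple bool) : bitseq :=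
  msg_bits j #|V| (msg (pi v) (codeword_of n j x)).

Definition equality_protocol : protocol V k :=
  Protocol 1 (fun r v => if (r == 0) && (v \in S) then msg_len n j #|V| else 0)
    (fun _ v x _ => sender_bits v x)
    (fun v x h => [forall u, e v u && (u \in S) ==> (h 0 u == sender_bits u x)]).

Lemma accepts_equality_protocol lam v : accepts e equality_protocol lam v =
  [forall u, e v u && (u \in S) ==> (sender_bits u (lam u) == sender_bits u (lam v))].
Proof.
apply: eq_forallb => u; rewrite /view /=; case: (e v u) => //=.
by case: (u \in S); rewrite //= fix_len_size ?size_msg_bits.
Qed.

Lemma equality_protocol_senders : senders_in equality_protocol S.
Proof. by move=> r v _ /negbTE /= ->; rewrite andbF. Qed.

Lemma equality_protocol_cost : cost equality_protocol = #|S| * msg_len n j #|V|.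
Proof. by rewrite /cost big_ord1 /= -big_mkcond sum_nat_const. Qed.

Variables s t : V.
Hypotheses (e_sym : symmetric e) (e_irr : irreflexive e).
Hypotheses (connected : graph_connected e) (S_tvc : is_tvc e S).
Hypotheses (pi_st : st_numbering e pi s t) (est : e s t) (tS : t \in S).

Lemma equality_protocol_solves : solves e equality_protocol.
Proof.
move=> lam; split=> [lam_eq v | [u0 [v0 lam_neq]]].
  by rewrite accepts_equality_protocol; apply/forallP => u; rewrite (lam_eq u v) eqxx implybT.
apply/existsP; rewrite -negb_forall; apply: contra_notN lam_neq => /forallP all_acc.
have accepted v u : e v u -> u \in S ->
    msg (pi u) (codeword_of n j (lam v)) = msg (pi u) (codeword_of n j (lam u)).
  move=> evu uS; have [_ pi_lt _ _] := pi_st.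
  apply: (msg_bits_inj (pi_lt u)); try exact: codeword_of_lt.
  have := all_acc v; rewrite accepts_equality_protocol => /forallP/(_ u).
  by rewrite evu uS implyTb => /eqP; rewrite /sender_bits => ->.
have agree := codeword_agree e_sym e_irr connected S_tvc pi_st est tS accepted.
have k_le : k <= n.*2.+1 * j.
  by rewrite ltnW // (leq_trans (blocks_cover k)) ?leq_mul2r ?leqnSn ?orbT.
by apply: (codeword_of_inj _ k_le); rewrite // !agree.
Qed.

End Protocol.

Local Open Scope ring_scope.

Theorem theorem1p3 (V : finType) (e : rel V) :
  simple_graph e -> two_connected e ->
  forall S : {set V}, min_tvc e S ->
    (exists f : nat -> rat,
        (forall eps : rat, 0 < eps ->
           exists N : nat, forall k : nat, (N <= k)%N -> `|f k| <= eps * k%:R) /\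
        (forall k : nat, (0 < k)%N ->
           exists P : protocol V k,
             [/\ solves e P, senders_in P S &
                 (cost P)%:R <= (k%:R / 2 + f k) * #|S|%:R])) /\
    (forall eps : rat, 0 < eps ->
       exists N : nat, forall k : nat, (N <= k)%N ->
         exists P : protocol V k,
           solves e P /\ (cost P)%:R <= (#|S|%:R / 2 + eps) * k%:R).
Proof.
move=> [e_sym e_irr] [V_gt2 connected connected_del] S [S_tvc _].
have [s _] := card_gt0P (ltnW (ltnW V_gt2)).
have [t tS est] := S_tvc.2 s.
have st : s != t by apply: contraTneq est => ->; rewrite e_irr.
have [pi pi_st] := st_numbering_exists e_sym connected connected_del est st.
pose P k := equality_protocol e S pi k.
have P_solves k : solves e (P k) by exact: equality_protocol_solves pi_st est tS.
pose l k := msg_len (blocks k) (block_width k) #|V|.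
split.
  exists (fun k => (l k)%:R - k%:R / 2); split; first exact: msg_len_half.
  move=> k _; exists (P k); split; [exact: P_solves | exact: equality_protocol_senders |].
  by rewrite equality_protocol_cost natrM mulrC addrC subrK.
move=> eps eps_gt0.
have S_gt0 : 0 < #|S|%:R :> rat by rewrite ltr0n; apply/card_gt0P; exists t.
have [N half] := msg_len_half #|V| (divr_gt0 eps_gt0 S_gt0).
exists N => k /half l_le; exists (P k); split=> //; rewrite equality_protocol_cost natrM.
have : #|S|%:R * ((l k)%:R - k%:R / 2) <= eps * k%:R.
  have -> : eps * k%:R = #|S|%:R * (eps / #|S|%:R * k%:R) by field; exact: lt0r_neq0.
  by rewrite ler_pM2l // (le_trans (ler_norm _)).
rewrite /l; lra.
Qed.
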